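(* Let $Z\colon TM\setminus 0\to TM$ be a smooth vector field along $E$ (components $Z^\mu(x,y)$) and let $s\colon M\to TM\setminus 0$ be a smooth section. Then on $M$ \[ \nabla^{s^*g}\cdot s^*Z=s^*\big(\nabla^{HC}\cdot Z\big)+I_\mu(x,s(x))\,D_{s^*Z}s^\mu+\frac{\partial Z^\mu}{\partial y^\beta}(x,s(x))\,D_\mu s^\beta , \] where $s^*Z$ is the vector field $x\mapsto Z^\mu(x,s(x))\partial_\mu$ on $M$, $\nabla^{s^*g}\cdot$ denotes the divergence with respect to the Levi-Civita connection of the pseudo-Riemannian metric $s^*g$ (components $g_{\alpha\beta}(x,s(x))$), and $\nabla^{HC}\cdot Z=(\nabla^{HC}_\alpha Z)^\alpha$.
   Context: $M$ smooth $n$-manifold, $E=TM\setminus 0$, induced coordinates $\{x^\mu,y^\mu\}$. $\mathscr{L}\colon E\to\mathbb{R}$ smooth, positively homogeneous of degree two in $y$, with non-degenerate Finsler metric $g_{\mu\nu}=\partial^2\mathscr{L}/\partial y^\mu\partial y^\nu$ (any signature), inverse $g^{\mu\nu}$. Cartan torsion $C_{\alpha\beta\gamma}=\tfrac12\partial g_{\beta\gamma}/\partial y^\alpha$, mean Cartan torsion $I_\gamma=g^{\alpha\beta}C_{\alpha\beta\gamma}$. Spray $2G^\alpha=g^{\alpha\delta}\big(\frac{\partial^2\mathscr{L}}{\partial x^\gamma\partial y^\delta}y^\gamma-\frac{\partial\mathscr{L}}{\partial x^\delta}\big)$, $N^\alpha_\mu=\partial G^\alpha/\partial y^\mu$, $\frac{\delta}{\delta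 x^\mu}=\frac{\partial}{\partial x^\mu}-N^\nu_\mu\frac{\partial}{\partial y^\nu}$, $\Gamma^\alpha_{\beta\gamma}=\tfrac12 g^{\alpha\sigma}\big(\frac{\delta g_{\sigma\gamma}}{\delta x^\beta}+\frac{\delta g_{\sigma\beta}}{\delta x^\gamma}-\frac{\delta g_{\beta\gamma}}{\delta x^\sigma}\big)$. Horizontal covariant derivative $(\nabla^{HC}_\alpha Z)^\beta=\frac{\delta Z^\beta}{\delta x^\alpha}+\Gamma^\beta_{\mu\alpha}Z^\mu$. For the section $s$: $D_\alpha s^\mu=\partial_\alpha s^\mu+N^\mu_\alpha(x,s(x))$, $D_Ws^\mu=W^\alpha D_\alpha s^\mu$; $s^*$ of a function on $E$ means its evaluation at $y=s(x)$. *)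

From Stdlib Require Import Reals Lra List Arith ClassicalEpsilon.
Open Scope R_scope.

(* Points of R^n are represented as functions nat -> R; only the
   coordinates i < n are meaningful. *)
Definition vec := nat -> R.

Definition sumn (n : nat) (f : nat -> R) : R :=
  fold_right Rplus 0 (map f (seq 0 n)).

Definition kron (i j : nat) : R := if Nat.eqb i j then 1 else 0.

Definition upd (p : vec) (k : nat) (t : R) : vec :=
  fun i => if Nat.eqb i k then t else p i.

(* partial derivative d f / d p^k at p (chosen by classical choice; it is the
   unique derivative whenever it exists) *)
Definition pd (f : vec -> R) (k : nat) (p : vec) : R :=
  epsilon (inhabits 0)
    (fun l => derivable_pt_lim (fun t => f (upd p k t)) (p k) l).

(* y lies in T_xM \ 0 *)
Definition nz (n : nat) (y : vec) : Prop := exists i, (i < n)%nat /\ y i <> 0.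

Definition Efun := vec -> vec -> R.

Definition dx (k : nat) (F : Efun) : Efun := fun x y => pd (fun x' => F x' y) k x.
Definition dy (k : nat) (F : Efun) : Efun := fun x y => pd (fun y' => F x y') k y.

Fixpoint dE (ops : list (bool * nat)) (F : Efun) : Efun :=
  match ops with
  | nil => F
  | (b, k) :: t => if b then dx k (dE t F) else dy k (dE t F)
  end.

Definition contE (n : nat) (F : Efun) (x y : vec) : Prop :=
  forall eps, eps > 0 -> exists del, del > 0 /\
    forall x' y', (forall i, (i < n)%nat -> Rabs (x' i - x i) < del /\ Rabs (y' i - y i) < del) ->
      Rabs (F x' y' - F x y) < eps.

Definition smoothE (n : nat) (F : Efun) : Prop :=
  forall ops : list (bool * nat), Forall (fun o => (snd o < n)%nat) ops ->
  forall x y, nz n y ->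
    contE n (dE ops F) x y /\
    (forall k, (k < n)%nat ->
       (exists l, derivable_pt_lim (fun t => dE ops F (upd x k t) y) (x k) l) /\
       (exists l, derivable_pt_lim (fun t => dE ops F x (upd y k t)) (y k) l)).

Definition Mfun := vec -> R.

Fixpoint dM (ks : list nat) (f : Mfun) : Mfun :=
  match ks with
  | nil => f
  | k :: t => pd (dM t f) k
  end.

Definition contM (n : nat) (f : Mfun) (x : vec) : Prop :=
  forall eps, eps > 0 -> exists del, del > 0 /\
    forall x', (forall i, (i < n)%nat -> Rabs (x' i - x i) < del) ->
      Rabs (f x' - f x) < eps.

Definition smoothM (n : nat) (f : Mfun) : Prop :=
  forall ks : list nat, Forall (fun k => (k < n)%nat) ks ->
  forall x, contM n (dM ks f) x /\
    (forall k, (k < n)%nat -> exists l, derivable_pt_lim (fun t => dM ks f (upd x k t)) (x k) l).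

Section Finsler.
Variable n : nat.
Variable L : Efun.
Variable ginv : nat -> nat -> Efun.

Definition gF (mu nu : nat) : Efun := dy mu (dy nu L).

Definition Cartan (a b c : nat) : Efun := fun x y => / 2 * dy a (gF b c) x y.

Definition meanCartan (c : nat) : Efun := fun x y =>
  sumn n (fun a => sumn n (fun b => ginv a b x y * Cartan a b c x y)).

(* G^alpha  (the spray is 2 G^alpha) *)
Definition Gspray (a : nat) : Efun := fun x y =>
  / 2 * sumn n (fun d => ginv a d x y *
     (sumn n (fun c => dx c (dy d L) x y * y c) - dx d L x y)).

Definition Nlin (a mu : nat) : Efun := dy mu (Gspray a).

Definition ddelta (mu : nat) (F : Efun) : Efun := fun x y =>
  dx mu F x y - sumn n (fun nu => Nlin nu mu x y * dy nu F x y).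

Definition GammaHC (a b c : nat) : Efun := fun x y =>
  / 2 * sumn n (fun s => ginv a s x y *
     (ddelta b (gF s c) x y + ddelta c (gF s b) x y - ddelta s (gF b c) x y)).

Definition divHC (Z : nat -> Efun) : Efun := fun x y =>
  sumn n (fun a => ddelta a (Z a) x y + sumn n (fun mu => GammaHC a mu a x y * Z mu x y)).

Definition Ds (s : vec -> vec) (a mu : nat) : Mfun := fun x =>
  pd (fun x' => s x' mu) a x + Nlin mu a x (s x).

Definition DWs (s : vec -> vec) (W : nat -> Mfun) (mu : nat) : Mfun := fun x =>
  sumn n (fun a => W a x * Ds s a mu x).

Definition pullE (s : vec -> vec) (F : Efun) : Mfun := fun x => F x (s x).
Definition pullZ (s : vec -> vec) (Z : nat -> Efun) : nat -> Mfun :=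
  fun mu => pullE s (Z mu).

Definition GammaLC (s : vec -> vec) (a b c : nat) : Mfun := fun x =>
  / 2 * sumn n (fun si => ginv a si x (s x) *
     (pd (pullE s (gF si c)) b x + pd (pullE s (gF si b)) c x
      - pd (pullE s (gF b c)) si x)).

Definition divLC (s : vec -> vec) (W : nat -> Mfun) : Mfun := fun x =>
  sumn n (fun a => pd (W a) a x + sumn n (fun b => GammaLC s a a b x * W b x)).

End Finsler.

(* The chain rule for the section, in the form
   d_c (s^*F) = s^*(delta_c F) + (dF/dy^b) D_c s^b, applied to Z gives the divergence
   term and the last sum; applied to g it gives the Christoffel symbols of s^*g as
   s^*Gamma^HC plus three Cartan-torsion terms. In the trace two of these cancel by the
   symmetry of g^{ab}, and the third is I_b D_W s^b because the Cartan tensor is totally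
   symmetric. The analytic input is the chain rule for functions with continuous partial
   derivatives (mean value theorem one coordinate at a time) and Schwarz's theorem for the
   y-derivatives of L. *)

From Stdlib Require Import Reals Lra Lia List FunctionalExtensionality PropExtensionality ClassicalEpsilon.
From Coquelicot Require Import Coquelicot.
Open Scope R_scope.

(** * Finite sums *)

Lemma sumn_O f : sumn 0 f = 0.
Proof. reflexivity. Qed.

Lemma sumn_S n f : sumn (S n) f = sumn n f + f n.
Proof.
unfold sumn; rewrite seq_S, map_app, fold_right_app; simpl.
generalize (f n); induction (map f (seq 0 n)) as [|a l IH]; intro c; simpl; [lra|].
rewrite IH; lra.
Qed.

Lemma sumn_ext n f g : (forall i, (i < n)%nat -> f i = g i) -> sumn n f = sumn n g.
Proof.
induction n as [|n IH]; intros H; [reflexivity|].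
rewrite !sumn_S, IH, H; auto.
Qed.

Lemma sumn_plus n f g : sumn n (fun i => f i + g i) = sumn n f + sumn n g.
Proof. induction n as [|n IH]; [rewrite !sumn_O; lra|rewrite !sumn_S, IH; lra]. Qed.

Lemma sumn_minus n f g : sumn n (fun i => f i - g i) = sumn n f - sumn n g.
Proof. induction n as [|n IH]; [rewrite !sumn_O; lra|rewrite !sumn_S, IH; lra]. Qed.

Lemma sumn_scal_l n c f : c * sumn n f = sumn n (fun i => c * f i).
Proof. induction n as [|n IH]; [rewrite !sumn_O; lra|rewrite !sumn_S, <- IH; lra]. Qed.

Lemma sumn_scal_r n c f : sumn n f * c = sumn n (fun i => f i * c).
Proof. induction n as [|n IH]; [rewrite !sumn_O; lra|rewrite !sumn_S, <- IH; lra]. Qed.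

Lemma sumn_zero n : sumn n (fun _ => 0) = 0.
Proof. induction n as [|n IH]; [reflexivity|rewrite sumn_S, IH; lra]. Qed.

Lemma sumn_swap n m (f : nat -> nat -> R) :
  sumn n (fun i => sumn m (fun j => f i j)) = sumn m (fun j => sumn n (fun i => f i j)).
Proof.
induction n as [|n IH].
- rewrite sumn_O, (sumn_ext _ _ (fun _ => 0)), sumn_zero; auto.
- rewrite sumn_S, IH, <- sumn_plus. apply sumn_ext; intros; rewrite sumn_S; reflexivity.
Qed.

Lemma sumn_single n f k : (k < n)%nat ->
  (forall i, (i < n)%nat -> i <> k -> f i = 0) -> sumn n f = f k.
Proof.
induction n as [|n IH]; intros Hk H; [lia|]. rewrite sumn_S.
destruct (Nat.eq_dec k n) as [->|Hkn].
- rewrite (sumn_ext _ _ (fun _ => 0)), sumn_zero; [lra|intros; apply H; lia].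
- rewrite IH, (H n); [lra|lia|lia|lia|intros; apply H; lia].
Qed.

Lemma sumn_kron n f k : (k < n)%nat -> sumn n (fun i => f i * kron i k) = f k.
Proof.
intros Hk. rewrite (sumn_single _ _ k Hk); unfold kron.
- rewrite Nat.eqb_refl; lra.
- intros i _ Hik. destruct (Nat.eqb_spec i k); [contradiction|lra].
Qed.

Lemma sumn_le n f g : (forall i, (i < n)%nat -> f i <= g i) -> sumn n f <= sumn n g.
Proof.
induction n as [|n IH]; intros H; [rewrite !sumn_O; lra|].
rewrite !sumn_S. pose proof (H n (Nat.lt_succ_diag_r n)).
assert (sumn n f <= sumn n g) by (apply IH; intros; apply H; lia). lra.
Qed.

Lemma sumn_nonneg n f : (forall i, (i < n)%nat -> 0 <= f i) -> 0 <= sumn n f.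
Proof. intros H. rewrite <- (sumn_zero n). apply sumn_le; auto. Qed.

Lemma sumn_ge_term n f i : (forall j, (j < n)%nat -> 0 <= f j) -> (i < n)%nat -> f i <= sumn n f.
Proof.
intros Hf Hi. apply Rle_trans with (sumn n (fun j => if Nat.eqb j i then f j else 0)).
- rewrite (sumn_single _ _ i Hi), Nat.eqb_refl; [lra|].
  intros j _ Hji. destruct (Nat.eqb_spec j i); [contradiction|reflexivity].
- apply sumn_le. intros j Hj. destruct (Nat.eqb j i); [lra|apply Hf; auto].
Qed.

(** * Partial derivatives and smoothness *)

Lemma upd_eq p k t : upd p k t k = t.
Proof. unfold upd; rewrite Nat.eqb_refl; reflexivity. Qed.

Lemma upd_neq p k t i : i <> k -> upd p k t i = p i.
Proof. intros; unfold upd. destruct (Nat.eqb_spec i k); [contradiction|reflexivity]. Qed.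

Lemma upd_shadow p k a b : upd (upd p k a) k b = upd p k b.
Proof. apply functional_extensionality; intro i; unfold upd. destruct (Nat.eqb i k); auto. Qed.

Lemma upd_same p k : upd p k (p k) = p.
Proof.
apply functional_extensionality; intro i; unfold upd.
destruct (Nat.eqb_spec i k); subst; auto.
Qed.

Lemma upd_permute p k j a b : k <> j -> upd (upd p k a) j b = upd (upd p j b) k a.
Proof.
intros; apply functional_extensionality; intro i; unfold upd.
destruct (Nat.eqb_spec i j), (Nat.eqb_spec i k); subst; auto; contradiction.
Qed.

Lemma pd_unique f k p l :
  derivable_pt_lim (fun t => f (upd p k t)) (p k) l -> pd f k p = l.
Proof.
intros H. unfold pd.
pose proof (epsilon_spec (inhabits 0)
  (fun l => derivable_pt_lim (fun t => f (upd p k t)) (p k) l) (ex_intro _ l H)) as Hl.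
eapply uniqueness_limite; eauto.
Qed.

Lemma pd_derivable f k p : (exists l, derivable_pt_lim (fun t => f (upd p k t)) (p k) l) ->
  derivable_pt_lim (fun t => f (upd p k t)) (p k) (pd f k p).
Proof. intros [l H]. rewrite (pd_unique _ _ _ _ H). exact H. Qed.

Lemma pd_local f g k p del : 0 < del ->
  (forall t, Rabs (t - p k) < del -> f (upd p k t) = g (upd p k t)) -> pd f k p = pd g k p.
Proof.
intros Hd H. unfold pd. f_equal. apply functional_extensionality; intro l.
apply propositional_extensionality. rewrite <- !is_derive_Reals.
split; apply is_derive_ext_loc; exists (mkposreal del Hd); intros t Ht;
  [|symmetry]; apply H; exact Ht.
Qed.

Lemma dE_app ops1 ops2 F : dE (ops1 ++ ops2) F = dE ops1 (dE ops2 F).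
Proof. induction ops1 as [|[b k] t IH]; simpl; auto. rewrite IH; auto. Qed.

Lemma smoothE_dy n F k : (k < n)%nat -> smoothE n F -> smoothE n (dy k F).
Proof.
intros Hk HF ops Hops. change (dy k F) with (dE ((false, k) :: nil) F).
rewrite <- dE_app. apply HF, Forall_app; auto.
Qed.

Lemma smoothE_cont n F x y : smoothE n F -> nz n y -> contE n F x y.
Proof. intros HF Hy. exact (proj1 (HF nil (Forall_nil _) x y Hy)). Qed.

Lemma smoothE_derivable_x n F x y k : smoothE n F -> nz n y -> (k < n)%nat ->
  derivable_pt_lim (fun t => F (upd x k t) y) (x k) (dx k F x y).
Proof.
intros HF Hy Hk. apply (pd_derivable (fun x' => F x' y)).
exact (proj1 (proj2 (HF nil (Forall_nil _) x y Hy) k Hk)).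
Qed.

Lemma smoothE_derivable_y n F x y k : smoothE n F -> nz n y -> (k < n)%nat ->
  derivable_pt_lim (fun t => F x (upd y k t)) (y k) (dy k F x y).
Proof.
intros HF Hy Hk. apply (pd_derivable (fun y' => F x y')).
exact (proj2 (proj2 (HF nil (Forall_nil _) x y Hy) k Hk)).
Qed.

(* Points are functions [nat -> R], but continuity only constrains the coordinates below [n]. *)
Lemma smoothE_coords n F x y x' y' : smoothE n F -> nz n y ->
  (forall i, (i < n)%nat -> x' i = x i /\ y' i = y i) -> F x' y' = F x y.
Proof.
intros HF Hy Hi. pose proof (smoothE_cont n F x y HF Hy) as Hc.
apply Rminus_diag_uniq, Rabs_eq_0, Rle_antisym; [|apply Rabs_pos].
apply Rnot_lt_le; intro Hlt. destruct (Hc _ Hlt) as [d [Hd Hnear]].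
enough (Rabs (F x' y' - F x y) < Rabs (F x' y' - F x y)) by lra.
apply Hnear. intros i Hin. destruct (Hi i Hin) as [-> ->].
rewrite !Rminus_diag, Rabs_R0; split; lra.
Qed.

Lemma nz_open n y : nz n y -> exists d, 0 < d /\
  forall y', (forall i, (i < n)%nat -> Rabs (y' i - y i) < d) -> nz n y'.
Proof.
intros [i [Hi Hy]]. exists (Rabs (y i)). split; [apply Rabs_pos_lt; auto|].
intros y' H. exists i; split; auto. intro E. specialize (H i Hi).
rewrite E, Rminus_0_l, Rabs_Ropp in H. lra.
Qed.

Lemma dy_ext_nz n F1 F2 k x y : nz n y ->
  (forall y', nz n y' -> F1 x y' = F2 x y') -> dy k F1 x y = dy k F2 x y.
Proof.
intros Hy H. destruct (nz_open n y Hy) as [d [Hd Hnz]].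
apply (pd_local _ _ k y d Hd). intros t Ht. apply H, Hnz. intros i Hi.
destruct (Nat.eq_dec i k) as [->|Hik]; [rewrite upd_eq; auto|].
rewrite upd_neq, Rminus_diag, Rabs_R0; auto.
Qed.

(** * First-order Taylor expansion and the chain rule *)

Definition interp (a b : vec) (m : nat) : vec := fun i => if (i <? m)%nat then b i else a i.

Definition between n (a b v : vec) : Prop :=
  forall i, (i < n)%nat -> Rmin (a i) (b i) <= v i <= Rmax (a i) (b i).

Lemma interp_O a b : interp a b 0 = a.
Proof. reflexivity. Qed.

Lemma interp_S a b m : interp a b (S m) = upd (interp a b m) m (b m).
Proof.
apply functional_extensionality; intro i; unfold interp, upd.
destruct (Nat.eqb_spec i m), (Nat.ltb_spec i (S m)), (Nat.ltb_spec i m); subst; auto; lia.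
Qed.

Lemma interp_lt a b m i : (i < m)%nat -> interp a b m i = b i.
Proof. intros; unfold interp. destruct (Nat.ltb_spec i m); auto; lia. Qed.

Lemma upd_interp_same a b m : upd (interp a b m) m (a m) = interp a b m.
Proof.
replace (a m) with (interp a b m m) by (unfold interp; rewrite Nat.ltb_irrefl; reflexivity).
apply upd_same.
Qed.

Lemma between_upd_interp n a b m c : Rmin (a m) (b m) <= c <= Rmax (a m) (b m) ->
  between n a b (upd (interp a b m) m c).
Proof.
intros Hc i Hi. destruct (Nat.eq_dec i m) as [->|Him]; [rewrite upd_eq; auto|].
rewrite upd_neq; auto. unfold interp.
destruct (i <? m)%nat; unfold Rmin, Rmax; destruct (Rle_dec (a i) (b i)); lra.
Qed.

Lemma between_r n a b : between n a b b.
Proof. intros i _. split; [apply Rmin_r|apply Rmax_r]. Qed.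

Lemma between_dist n a b v i : between n a b v -> (i < n)%nat ->
  Rabs (v i - a i) <= Rabs (b i - a i).
Proof.
intros H Hi. specialize (H i Hi). unfold Rmin, Rmax in H.
destruct (Rle_dec (a i) (b i)); unfold Rabs; repeat destruct Rcase_abs; lra.
Qed.

Lemma mean_value_telescope n f a b D eps m : (m <= n)%nat ->
  (forall v j, between n a b v -> (j < n)%nat ->
     (exists l, derivable_pt_lim (fun t => f (upd v j t)) (v j) l) /\ Rabs (pd f j v - D j) <= eps) ->
  Rabs (f (interp a b m) - f a - sumn m (fun j => D j * (b j - a j)))
    <= eps * sumn m (fun j => Rabs (b j - a j)).
Proof.
intros Hm H. induction m as [|m IH].
- rewrite interp_O, !sumn_O, Rminus_diag, Rminus_0_r, Rabs_R0; lra.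
- rewrite interp_S, !sumn_S. set (v := interp a b m).
  assert (Hder : forall c, Rmin (a m) (b m) <= c <= Rmax (a m) (b m) ->
     derivable_pt_lim (fun t => f (upd v m t)) c (pd f m (upd v m c))).
  { intros c Hc. destruct (H _ m (between_upd_interp n a b m c Hc) ltac:(lia)) as [Hex _].
    apply pd_derivable in Hex. rewrite upd_eq in Hex.
    replace (fun t => f (upd v m t)) with (fun t => f (upd (upd v m c) m t)); auto.
    apply functional_extensionality; intro t; rewrite upd_shadow; auto. }
  destruct (MVT_gen (fun t => f (upd v m t)) (a m) (b m) (fun c => pd f m (upd v m c)))
    as [c [Hc Hmvt]].
  { intros c Hc. apply is_derive_Reals, Hder. lra. }
  { intros c Hc. exact (derivable_continuous_pt _ _ (exist _ _ (Hder c Hc))). }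
  simpl in Hmvt. unfold v in Hmvt at 2. rewrite upd_interp_same in Hmvt. fold v in Hmvt.
  destruct (H (upd v m c) m (between_upd_interp n a b m c Hc) ltac:(lia)) as [_ HD].
  assert (Hstep : Rabs (f (upd v m (b m)) - f v - D m * (b m - a m)) <= eps * Rabs (b m - a m)).
  { rewrite Hmvt, <- Rmult_minus_distr_r, Rabs_mult.
    apply Rmult_le_compat_r; auto using Rabs_pos. }
  assert (IHm := IH ltac:(lia)); fold v in IHm.
  pose proof (Rabs_triang (f v - f a - sumn m (fun j => D j * (b j - a j)))
                          (f (upd v m (b m)) - f v - D m * (b m - a m))).
  replace (f (upd v m (b m)) - f a - (sumn m (fun j => D j * (b j - a j)) + D m * (b m - a m)))
    with ((f v - f a - sumn m (fun j => D j * (b j - a j)))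
          + (f (upd v m (b m)) - f v - D m * (b m - a m))) by ring.
  lra.
Qed.

Lemma ex_uniform_delta n (P : nat -> R -> Prop) :
  (forall j d d', P j d -> 0 < d' <= d -> P j d') ->
  (forall j, (j < n)%nat -> exists d, 0 < d /\ P j d) ->
  exists d, 0 < d /\ forall j, (j < n)%nat -> P j d.
Proof.
intros Hmon. induction n as [|n IH]; intros H.
- exists 1; split; [lra|intros; lia].
- destruct IH as [d1 [Hd1 H1]]; [intros; apply H; lia|].
  destruct (H n ltac:(lia)) as [d2 [Hd2 H2]].
  pose proof (Rmin_l d1 d2); pose proof (Rmin_r d1 d2).
  assert (0 < Rmin d1 d2) by (apply Rmin_glb_lt; auto).
  exists (Rmin d1 d2); split; auto. intros j Hj.
  destruct (Nat.eq_dec j n) as [->|Hjn].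
  + apply (Hmon n d2); auto; lra.
  + apply (Hmon j d1); [apply H1; lia|lra].
Qed.

Definition nearE n d (x y x' y' : vec) : Prop :=
  forall i, (i < n)%nat -> Rabs (x' i - x i) < d /\ Rabs (y' i - y i) < d.

Lemma smoothE_partials_near n F x y eps : smoothE n F -> nz n y -> 0 < eps ->
  exists d, 0 < d /\ forall j, (j < n)%nat -> forall x' y', nearE n d x y x' y' ->
    Rabs (dx j F x' y' - dx j F x y) < eps /\ Rabs (dy j F x' y' - dy j F x y) < eps.
Proof.
intros HF Hy He. apply ex_uniform_delta.
{ intros j d d' Hj Hd x' y' Hn. apply Hj. intros i Hi. destruct (Hn i Hi). split; lra. }
intros j Hj.
destruct (proj1 (HF ((true, j) :: nil) ltac:(repeat constructor; auto) x y Hy) eps He)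
  as [e1 [He1 Hx]].
destruct (proj1 (HF ((false, j) :: nil) ltac:(repeat constructor; auto) x y Hy) eps He)
  as [e2 [He2 Hy2]].
pose proof (Rmin_l e1 e2); pose proof (Rmin_r e1 e2).
exists (Rmin e1 e2); split; [apply Rmin_glb_lt; auto|].
intros x' y' Hn. split; [apply Hx|apply Hy2]; intros i Hi; destruct (Hn i Hi); split; lra.
Qed.

Lemma smoothE_taylor1 n F x y eps : smoothE n F -> nz n y -> 0 < eps ->
  exists d, 0 < d /\ forall x' y', nearE n d x y x' y' ->
   Rabs (F x' y' - F x y - sumn n (fun j => dx j F x y * (x' j - x j))
           - sumn n (fun j => dy j F x y * (y' j - y j)))
   <= eps * (sumn n (fun j => Rabs (x' j - x j)) + sumn n (fun j => Rabs (y' j - y j))).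
Proof.
intros HF Hy He.
destruct (nz_open n y Hy) as [d0 [Hd0 Hnz]].
destruct (smoothE_partials_near n F x y eps HF Hy He) as [d1 [Hd1 Hpart]].
pose proof (Rmin_l d0 d1); pose proof (Rmin_r d0 d1).
exists (Rmin d0 d1); split; [apply Rmin_glb_lt; auto|].
intros x' y' Hn.
assert (Hnz' : forall v, between n y y' v -> nz n v).
{ intros v Hv. apply Hnz. intros i Hi. destruct (Hn i Hi).
  pose proof (between_dist n y y' v i Hv Hi). lra. }
assert (Hxstep : Rabs (F x' y' - F x y' - sumn n (fun j => dx j F x y * (x' j - x j)))
                 <= eps * sumn n (fun j => Rabs (x' j - x j))).
{ rewrite <- (smoothE_coords n F x' y' (interp x x' n) y');
    [|auto|apply Hnz', (between_r n)
     |intros i Hi; rewrite interp_lt; auto].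
  apply (mean_value_telescope n (fun v => F v y')); auto.
  intros v j Hv Hj. split.
  - exists (dx j F v y'). apply (smoothE_derivable_x n); auto.
    apply Hnz', (between_r n).
  - apply Rlt_le, (Hpart j Hj v y'). intros i Hi. destruct (Hn i Hi).
    pose proof (between_dist n x x' v i Hv Hi). split; lra. }
assert (Hystep : Rabs (F x y' - F x y - sumn n (fun j => dy j F x y * (y' j - y j)))
                 <= eps * sumn n (fun j => Rabs (y' j - y j))).
{ rewrite <- (smoothE_coords n F x y' x (interp y y' n));
    [|auto|apply Hnz', (between_r n)
     |intros i Hi; rewrite interp_lt; auto].
  apply (mean_value_telescope n (fun v => F x v)); auto.
  intros v j Hv Hj. split.
  - exists (dy j F x v). apply (smoothE_derivable_y n); auto.
  - apply Rlt_le, (Hpart j Hj x v). intros i Hi. destruct (Hn i Hi).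
    pose proof (between_dist n y y' v i Hv Hi). rewrite Rminus_diag, Rabs_R0. split; lra. }
pose proof (Rabs_triang (F x' y' - F x y' - sumn n (fun j => dx j F x y * (x' j - x j)))
                        (F x y' - F x y - sumn n (fun j => dy j F x y * (y' j - y j)))).
match goal with |- Rabs ?e <= _ => replace e with
  ((F x' y' - F x y' - sumn n (fun j => dx j F x y * (x' j - x j)))
   + (F x y' - F x y - sumn n (fun j => dy j F x y * (y' j - y j)))) by ring end.
lra.
Qed.

Definition little_o (r : R -> R) : Prop :=
  forall eps, 0 < eps -> exists del, 0 < del /\
    forall h, h <> 0 -> Rabs h < del -> Rabs (r h) <= eps * Rabs h.

Lemma derivable_pt_lim_little_o f x l :
  derivable_pt_lim f x l <-> little_o (fun h => f (x + h) - f x - l * h).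
Proof.
split.
- intros Hf eps Heps. destruct (Hf eps Heps) as [del Hdel].
  exists del; split; [apply cond_pos|]. intros h Hh Hhd.
  specialize (Hdel h Hh Hhd).
  replace (f (x + h) - f x - l * h) with (((f (x + h) - f x) / h - l) * h) by (field; auto).
  rewrite Rabs_mult. apply Rmult_le_compat_r; [apply Rabs_pos|lra].
- intros Ho eps Heps. destruct (Ho (eps / 2) ltac:(lra)) as [del [Hdel Ho']].
  exists (mkposreal del Hdel). intros h Hh Hhd. specialize (Ho' h Hh Hhd).
  pose proof (Rabs_pos_lt h Hh).
  replace ((f (x + h) - f x) / h - l) with ((f (x + h) - f x - l * h) / h) by (field; auto).
  unfold Rdiv. rewrite Rabs_mult, Rabs_inv.
  apply (Rmult_lt_reg_r (Rabs h)); auto. rewrite Rmult_assoc, Rinv_l; nra.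
Qed.

Lemma little_o_le r1 r2 : (forall h, Rabs (r2 h) <= Rabs (r1 h)) -> little_o r1 -> little_o r2.
Proof.
intros Hle Ho eps Heps. destruct (Ho eps Heps) as [del [Hdel Ho']].
exists del; split; auto. intros h Hh Hhd. specialize (Ho' h Hh Hhd). specialize (Hle h). lra.
Qed.

Lemma little_o_plus r1 r2 : little_o r1 -> little_o r2 -> little_o (fun h => r1 h + r2 h).
Proof.
intros H1 H2 eps Heps.
destruct (H1 (eps / 2) ltac:(lra)) as [d1 [Hd1 H1']].
destruct (H2 (eps / 2) ltac:(lra)) as [d2 [Hd2 H2']].
pose proof (Rmin_l d1 d2); pose proof (Rmin_r d1 d2).
exists (Rmin d1 d2); split; [apply Rmin_glb_lt; auto|]. intros h Hh Hhd.
specialize (H1' h Hh ltac:(lra)); specialize (H2' h Hh ltac:(lra)).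
pose proof (Rabs_triang (r1 h) (r2 h)). lra.
Qed.

Lemma little_o_scal c r : little_o r -> little_o (fun h => c * r h).
Proof.
intros Ho eps Heps. pose proof (Rabs_pos c).
destruct (Ho (eps / (Rabs c + 1))) as [del [Hdel Ho']]; [apply Rdiv_lt_0_compat; lra|].
exists del; split; auto. intros h Hh Hhd. specialize (Ho' h Hh Hhd).
rewrite Rabs_mult. apply Rle_trans with (Rabs c * (eps / (Rabs c + 1) * Rabs h)).
- apply Rmult_le_compat_l; auto.
- assert (0 <= eps / (Rabs c + 1) * Rabs h).
  { apply Rmult_le_pos; [apply Rlt_le, Rdiv_lt_0_compat; lra|apply Rabs_pos]. }
  apply Rle_trans with ((Rabs c + 1) * (eps / (Rabs c + 1) * Rabs h)); [nra|].
  right; field; lra.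
Qed.

Lemma little_o_sumn n (r : nat -> R -> R) :
  (forall b, (b < n)%nat -> little_o (r b)) -> little_o (fun h => sumn n (fun b => r b h)).
Proof.
induction n as [|n IH]; intros H.
- intros eps Heps. exists 1; split; [lra|]. intros h _ _.
  rewrite sumn_O, Rabs_R0. pose proof (Rabs_pos h); nra.
- apply (little_o_le (fun h => sumn n (fun b => r b h) + r n h)).
  { intros h; rewrite sumn_S; lra. }
  apply little_o_plus; [apply IH; intros; apply H|apply H]; lia.
Qed.

Lemma sumn_upd_incr n (g : nat -> R -> R) x c h : (c < n)%nat -> (forall j, g j 0 = 0) ->
  sumn n (fun j => g j (upd x c (x c + h) j - x j)) = g c h.
Proof.
intros Hc Hg. rewrite (sumn_single _ _ c Hc), upd_eq.
- f_equal; ring.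
- intros j _ Hjc. rewrite upd_neq, Rminus_diag; auto.
Qed.

Section ChainRule.
Variables (n : nat) (F : Efun) (s : vec -> vec) (x : vec) (c : nat) (sd : nat -> R).
Hypotheses (HF : smoothE n F) (Hnz : nz n (s x)) (Hc : (c < n)%nat)
  (Hs : forall b, (b < n)%nat -> derivable_pt_lim (fun t => s (upd x c t) b) (x c) (sd b)).

Let X h := upd x c (x c + h).

Lemma section_increment_little_o b : (b < n)%nat ->
  little_o (fun h => s (X h) b - s x b - sd b * h).
Proof.
intros Hb. pose proof (proj1 (derivable_pt_lim_little_o _ _ _) (Hs b Hb)) as Ho.
cbv beta in Ho. rewrite upd_same in Ho. exact Ho.
Qed.

Lemma section_increment_bound : exists K d, 0 <= K /\ 0 < d /\
  forall h, h <> 0 -> Rabs h < d -> sumn n (fun i => Rabs (s (X h) i - s x i)) <= K * Rabs h.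
Proof.
assert (Ho : little_o (fun h => sumn n (fun b => Rabs (s (X h) b - s x b - sd b * h)))).
{ apply little_o_sumn. intros b Hb.
  apply (little_o_le (fun h => s (X h) b - s x b - sd b * h)).
  - intros h; rewrite Rabs_Rabsolu; lra.
  - apply section_increment_little_o; auto. }
destruct (Ho 1 Rlt_0_1) as [d [Hd Ho']].
exists (1 + sumn n (fun b => Rabs (sd b))), d. split; [|split; auto].
{ pose proof (sumn_nonneg n (fun b => Rabs (sd b)) (fun b _ => Rabs_pos (sd b))). lra. }
intros h Hh Hhd. specialize (Ho' h Hh Hhd).
apply Rle_trans with (sumn n (fun b => Rabs (s (X h) b - s x b - sd b * h) + Rabs (sd b) * Rabs h)).
- apply sumn_le. intros b _. rewrite <- Rabs_mult.
  replace (s (X h) b - s x b) with ((s (X h) b - s x b - sd b * h) + sd b * h) at 1 by ring.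
  apply Rabs_triang.
- rewrite sumn_plus, <- sumn_scal_r.
  pose proof (Rle_abs (sumn n (fun b => Rabs (s (X h) b - s x b - sd b * h)))). lra.
Qed.

Lemma taylor_remainder_little_o :
  little_o (fun h => F (X h) (s (X h)) - F x (s x)
    - sumn n (fun j => dx j F x (s x) * (X h j - x j))
    - sumn n (fun j => dy j F x (s x) * (s (X h) j - s x j))).
Proof.
intros eps Heps.
destruct section_increment_bound as [K [d [HK [Hd Hbound]]]].
destruct (smoothE_taylor1 n F x (s x) (eps / (1 + K)) HF Hnz) as [d0 [Hd0 Htaylor]].
{ apply Rdiv_lt_0_compat; lra. }
assert (Hd1 : 0 < d0 / (1 + K)) by (apply Rdiv_lt_0_compat; lra).
pose proof (Rmin_l d (d0 / (1 + K))); pose proof (Rmin_r d (d0 / (1 + K))).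
exists (Rmin d (d0 / (1 + K))); split; [apply Rmin_glb_lt; auto|].
intros h Hh Hhd. specialize (Hbound h Hh ltac:(lra)).
assert (HKh : (1 + K) * Rabs h < d0).
{ apply Rlt_le_trans with ((1 + K) * (d0 / (1 + K))); [apply Rmult_lt_compat_l; lra|].
  right; field; lra. }
assert (Hx : sumn n (fun j => Rabs (X h j - x j)) = Rabs h).
{ apply (sumn_upd_incr n (fun _ t => Rabs t)); auto. intros; apply Rabs_R0. }
eapply Rle_trans; [apply Htaylor|].
- intros i Hi. split.
  + apply Rle_lt_trans with (sumn n (fun j => Rabs (X h j - x j))).
    * apply (sumn_ge_term n (fun j => Rabs (X h j - x j))); auto using Rabs_pos.
    * pose proof (Rabs_pos h). nra.
  + apply Rle_lt_trans with (sumn n (fun j => Rabs (s (X h) j - s x j))).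
    * apply (sumn_ge_term n (fun j => Rabs (s (X h) j - s x j))); auto using Rabs_pos.
    * pose proof (Rabs_pos h). nra.
- rewrite Hx. apply Rle_trans with (eps / (1 + K) * ((1 + K) * Rabs h)).
  + apply Rmult_le_compat_l; [apply Rlt_le, Rdiv_lt_0_compat; lra|lra].
  + right; field; lra.
Qed.

Lemma chain_rule :
  derivable_pt_lim (fun t => F (upd x c t) (s (upd x c t))) (x c)
    (dx c F x (s x) + sumn n (fun b => dy b F x (s x) * sd b)).
Proof.
apply derivable_pt_lim_little_o. rewrite upd_same. fold (X 0).
apply (little_o_le (fun h =>
  (F (X h) (s (X h)) - F x (s x)
    - sumn n (fun j => dx j F x (s x) * (X h j - x j))
    - sumn n (fun j => dy j F x (s x) * (s (X h) j - s x j)))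
  + sumn n (fun b => dy b F x (s x) * (s (X h) b - s x b - sd b * h)))).
- intros h. right. f_equal.
  rewrite (sumn_ext n (fun b => dy b F x (s x) * (s (X h) b - s x b - sd b * h))
    (fun b => dy b F x (s x) * (s (X h) b - s x b) - dy b F x (s x) * sd b * h))
    by (intros; ring).
  rewrite sumn_minus, <- sumn_scal_r. unfold X.
  rewrite (sumn_upd_incr n (fun j t => dx j F x (s x) * t)) by (auto; intros; ring).
  ring.
- apply little_o_plus; [apply taylor_remainder_little_o|].
  apply little_o_sumn. intros b Hb. apply little_o_scal, section_increment_little_o; auto.
Qed.

End ChainRule.

(** * Symmetry of second fibre derivatives *)

Definition upd2 (y : vec) a b u v : vec := upd (upd y a u) b v.

Lemma upd2_same y a b : upd2 y a b (y a) (y b) = y.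
Proof. unfold upd2; rewrite !upd_same; reflexivity. Qed.

Lemma upd2_swap y a b u v : a <> b -> upd2 y a b u v = upd2 y b a v u.
Proof. intros; unfold upd2; apply upd_permute; auto. Qed.

Lemma upd2_dist y a b u v i : Rabs (upd2 y a b u v i - y i) <= Rabs (u - y a) + Rabs (v - y b).
Proof.
pose proof (Rabs_pos (u - y a)); pose proof (Rabs_pos (v - y b)). unfold upd2.
destruct (Nat.eq_dec i b) as [->|Hib]; [rewrite upd_eq; lra|].
rewrite upd_neq; auto.
destruct (Nat.eq_dec i a) as [->|Hia]; [rewrite upd_eq; lra|].
rewrite upd_neq, Rminus_diag, Rabs_R0; auto; lra.
Qed.

Lemma nz_upd2_near n y a b : nz n y -> exists r, 0 < r /\
  forall u v, Rabs (u - y a) < r -> Rabs (v - y b) < r -> nz n (upd2 y a b u v).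
Proof.
intros Hy. destruct (nz_open n y Hy) as [d [Hd Hnz]].
exists (d / 2); split; [lra|]. intros u v Hu Hv. apply Hnz. intros i _.
pose proof (upd2_dist y a b u v i). lra.
Qed.

Lemma derive_upd2_snd n G x y a b u v : smoothE n G -> nz n (upd2 y a b u v) -> (b < n)%nat ->
  is_derive (fun t => G x (upd2 y a b u t)) v (dy b G x (upd2 y a b u v)).
Proof.
intros HG Hnz Hb.
apply (is_derive_ext (fun t => G x (upd (upd2 y a b u v) b t))).
{ intros t; unfold upd2; rewrite upd_shadow; reflexivity. }
pose proof (smoothE_derivable_y n G x _ b HG Hnz Hb) as H.
replace (upd2 y a b u v b) with v in H by (unfold upd2; rewrite upd_eq; reflexivity).
apply is_derive_Reals, H.
Qed.

Lemma derive_upd2_fst n G x y a b u v : a <> b -> smoothE n G -> nz n (upd2 y a b u v) ->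
  (a < n)%nat -> is_derive (fun t => G x (upd2 y a b t v)) u (dy a G x (upd2 y a b u v)).
Proof.
intros Hab HG Hnz Ha. rewrite (upd2_swap y a b u v Hab) in *.
apply (is_derive_ext (fun t => G x (upd2 y b a v t))).
{ intros t; rewrite upd2_swap; auto. }
apply (derive_upd2_snd n); auto.
Qed.

Lemma derive_Derive_upd2 n F x y a b r u v : a <> b -> (a < n)%nat -> (b < n)%nat ->
  smoothE n F ->
  (forall u v, Rabs (u - y a) < r -> Rabs (v - y b) < r -> nz n (upd2 y a b u v)) ->
  Rabs (u - y a) < r / 2 -> Rabs (v - y b) < r / 2 ->
  is_derive (fun z => Derive (fun t => F x (upd2 y a b z t)) v) u
    (dy a (dy b F) x (upd2 y a b u v)).
Proof.
intros Hab Ha Hb HF Hnz Hu Hv.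
assert (Hr : 0 < r / 2) by (pose proof (Rabs_pos (u - y a)); lra).
apply (is_derive_ext_loc (fun z => dy b F x (upd2 y a b z v))).
- exists (mkposreal _ Hr). intros z Hz. cbn in Hz. unfold ball in Hz; cbn in Hz.
  unfold AbsRing_ball, abs, minus, plus, opp in Hz; cbn in Hz.
  symmetry. apply is_derive_unique, (derive_upd2_snd n); auto. apply Hnz; [|lra].
  replace (z - y a) with ((z + - u) + (u - y a)) by ring.
  pose proof (Rabs_triang (z + - u) (u - y a)). lra.
- apply (derive_upd2_fst n); auto using smoothE_dy. apply Hnz; lra.
Qed.

Lemma continuity_2d_upd2 n G x y a b : smoothE n G -> nz n y ->
  continuity_2d_pt (fun u v => G x (upd2 y a b u v)) (y a) (y b).
Proof.
intros HG Hy eps. rewrite upd2_same.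
destruct (smoothE_cont n G x y HG Hy eps (cond_pos eps)) as [d [Hd Hc]].
assert (Hd2 : 0 < d / 2) by lra.
exists (mkposreal _ Hd2). intros u v Hu Hv. cbn in Hu, Hv. apply Hc.
intros i _. rewrite Rminus_diag, Rabs_R0. pose proof (upd2_dist y a b u v i). split; lra.
Qed.

Lemma dy_comm n F x y a b : smoothE n F -> nz n y -> (a < n)%nat -> (b < n)%nat ->
  dy a (dy b F) x y = dy b (dy a F) x y.
Proof.
intros HF Hy Ha Hb. destruct (Nat.eq_dec a b) as [->|Hab]; [reflexivity|].
destruct (nz_upd2_near n y a b Hy) as [r [Hr Hnz]].
assert (Hnz' : forall v u, Rabs (v - y b) < r -> Rabs (u - y a) < r -> nz n (upd2 y b a v u)).
{ intros v u Hv Hu. rewrite <- upd2_swap; auto. }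
set (f u v := F x (upd2 y a b u v)).
assert (H1 : forall u v, Rabs (u - y a) < r / 2 -> Rabs (v - y b) < r / 2 ->
  is_derive (fun z => Derive (fun t => f z t) v) u (dy a (dy b F) x (upd2 y a b u v))).
{ intros u v Hu Hv. apply (derive_Derive_upd2 n F x y a b r); auto. }
assert (H2 : forall u v, Rabs (u - y a) < r / 2 -> Rabs (v - y b) < r / 2 ->
  is_derive (fun z => Derive (fun t => f t z) u) v (dy b (dy a F) x (upd2 y a b u v))).
{ intros u v Hu Hv. rewrite (upd2_swap y a b u v Hab).
  apply (is_derive_ext (fun z => Derive (fun t => F x (upd2 y b a z t)) u)).
  { intros z. apply Derive_ext. intros t. unfold f. rewrite upd2_swap; auto. }
  apply (derive_Derive_upd2 n F x y b a r); auto. }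
assert (Hr4 : 0 < r / 2) by lra.
assert (Hcenter : Rabs (y a - y a) < r / 2 /\ Rabs (y b - y b) < r / 2)
  by (rewrite !Rminus_diag, Rabs_R0; lra).
rewrite <- (upd2_same y a b) at 1 2.
rewrite <- (is_derive_unique _ _ _ (H1 (y a) (y b) (proj1 Hcenter) (proj2 Hcenter))).
rewrite <- (is_derive_unique _ _ _ (H2 (y a) (y b) (proj1 Hcenter) (proj2 Hcenter))).
apply Schwarz.
- exists (mkposreal _ Hr4). intros u v Hu Hv. cbn in Hu, Hv.
  assert (Hnuv : nz n (upd2 y a b u v)) by (apply Hnz; lra).
  repeat split; eexists;
    [apply (derive_upd2_fst n)|apply (derive_upd2_snd n)|apply H1|apply H2]; auto.
- apply (continuity_2d_pt_ext_loc (fun u v => dy a (dy b F) x (upd2 y a b u v))).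
  + exists (mkposreal _ Hr4). intros u v Hu Hv. symmetry. apply is_derive_unique, H1; auto.
  + apply (continuity_2d_upd2 n); auto using smoothE_dy.
- apply (continuity_2d_pt_ext_loc (fun u v => dy b (dy a F) x (upd2 y a b u v))).
  + exists (mkposreal _ Hr4). intros u v Hu Hv. symmetry. apply is_derive_unique, H2; auto.
  + apply (continuity_2d_upd2 n); auto using smoothE_dy.
Qed.

(** * Pullback of the horizontal connection *)

Lemma sumn_sym_cancel n (G P Q : nat -> nat -> R) :
  (forall a b, (a < n)%nat -> (b < n)%nat -> G a b = G b a) ->
  sumn n (fun a => sumn n (fun b => G a b * (P a b + Q a b - P b a)))
  = sumn n (fun a => sumn n (fun b => G a b * Q a b)).
Proof.
intros HG.
rewrite (sumn_ext _ _ (fun a => sumn n (fun b => G a b * P a b)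
    + sumn n (fun b => G a b * Q a b) - sumn n (fun b => G a b * P b a))).
2:{ intros a Ha. rewrite <- sumn_plus, <- sumn_minus. apply sumn_ext; intros; ring. }
rewrite sumn_minus, sumn_plus.
enough (sumn n (fun a => sumn n (fun b => G a b * P b a))
        = sumn n (fun a => sumn n (fun b => G a b * P a b))) by lra.
rewrite sumn_swap. apply sumn_ext; intros a Ha. apply sumn_ext; intros b Hb.
rewrite HG; auto.
Qed.

Lemma sumn_contract_reorder n (G : nat -> nat -> R) (C : nat -> nat -> nat -> R) (D : nat -> R) :
  sumn n (fun a => sumn n (fun b => G a b * sumn n (fun c => C a b c * D c)))
  = sumn n (fun c => sumn n (fun a => sumn n (fun b => G a b * C a b c)) * D c).
Proof.
transitivity (sumn n (fun a => sumn n (fun c => sumn n (fun b => G a b * C a b c * D c)))).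
- apply sumn_ext; intros a _. rewrite <- sumn_swap. apply sumn_ext; intros b _.
  rewrite sumn_scal_l. apply sumn_ext; intros; ring.
- rewrite sumn_swap. apply sumn_ext; intros c _.
  rewrite sumn_scal_r. apply sumn_ext; intros a _. rewrite sumn_scal_r. reflexivity.
Qed.

Lemma right_inverse_sym n (g h : nat -> nat -> R) :
  (forall i j, (i < n)%nat -> (j < n)%nat -> g i j = g j i) ->
  (forall i j, (i < n)%nat -> (j < n)%nat -> sumn n (fun k => g i k * h k j) = kron i j) ->
  forall a b, (a < n)%nat -> (b < n)%nat -> h a b = h b a.
Proof.
intros Hg Hh a b Ha Hb.
set (hgh := sumn n (fun m => sumn n (fun v => h m a * (g m v * h v b)))).
assert (E1 : hgh = h b a).
{ unfold hgh. rewrite (sumn_ext _ _ (fun m => h m a * kron m b)), sumn_kron; auto.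
  intros m Hm. rewrite <- (Hh m b), sumn_scal_l; auto. }
assert (E2 : hgh = h a b).
{ unfold hgh. rewrite sumn_swap, (sumn_ext _ _ (fun v => h v b * kron v a)), sumn_kron; auto.
  intros v Hv. rewrite <- (Hh v a), sumn_scal_l; auto.
  apply sumn_ext; intros m Hm. rewrite (Hg v m); auto; ring. }
congruence.
Qed.

Section FinslerPullback.
Variables (n : nat) (L : Efun) (ginv : nat -> nat -> Efun) (s : vec -> vec).
Hypotheses (HL : smoothE n L)
  (Hinv : forall x y, nz n y -> forall mu la, (mu < n)%nat -> (la < n)%nat ->
            sumn n (fun nu => gF L mu nu x y * ginv nu la x y) = kron mu la)
  (Hs : forall mu, (mu < n)%nat -> smoothM n (fun x => s x mu))
  (Hs0 : forall x, nz n (s x)).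

Lemma gF_smooth i j : (i < n)%nat -> (j < n)%nat -> smoothE n (gF L i j).
Proof. intros; unfold gF; apply smoothE_dy, smoothE_dy; auto. Qed.

Lemma gF_sym i j x y : nz n y -> (i < n)%nat -> (j < n)%nat -> gF L i j x y = gF L j i x y.
Proof. intros; unfold gF; apply (dy_comm n); auto. Qed.

Lemma ginv_sym a b x y : nz n y -> (a < n)%nat -> (b < n)%nat -> ginv a b x y = ginv b a x y.
Proof.
intros Hy Ha Hb.
apply (right_inverse_sym n (fun i j => gF L i j x y) (fun i j => ginv i j x y)); auto.
intros; apply gF_sym; auto.
Qed.

Lemma Cartan_sym13 a b c x y : nz n y -> (a < n)%nat -> (b < n)%nat -> (c < n)%nat ->
  Cartan L a b c x y = Cartan L c b a x y.
Proof.
intros Hy Ha Hb Hc. unfold Cartan, gF. f_equal.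
transitivity (dy a (dy c (dy b L)) x y).
{ apply (dy_ext_nz n); auto. intros y' Hy'. apply (dy_comm n); auto. }
rewrite (dy_comm n); auto using smoothE_dy.
apply (dy_ext_nz n); auto. intros y' Hy'. apply (dy_comm n); auto.
Qed.

Lemma ddelta_gF_sym c i j x y : nz n y -> (i < n)%nat -> (j < n)%nat ->
  ddelta n L ginv c (gF L i j) x y = ddelta n L ginv c (gF L j i) x y.
Proof.
intros Hy Hi Hj. unfold ddelta, dx. f_equal.
- f_equal. apply functional_extensionality; intro x'. apply gF_sym; auto.
- apply sumn_ext; intros nu Hnu. f_equal. apply (dy_ext_nz n); auto.
  intros y' Hy'. apply gF_sym; auto.
Qed.

Lemma GammaHC_sym a b c x y : nz n y -> (b < n)%nat -> (c < n)%nat ->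
  GammaHC n L ginv a b c x y = GammaHC n L ginv a c b x y.
Proof.
intros Hy Hb Hc. unfold GammaHC. f_equal. apply sumn_ext; intros si Hsi.
rewrite (ddelta_gF_sym si b c); auto. ring.
Qed.

Lemma pd_pullE F c x : smoothE n F -> (c < n)%nat ->
  pd (pullE s F) c x = ddelta n L ginv c F x (s x)
    + sumn n (fun b => dy b F x (s x) * Ds n L ginv s c b x).
Proof.
intros HF Hc. unfold pullE. erewrite pd_unique.
2:{ apply (chain_rule n); auto. intros b Hb.
    apply (pd_derivable (fun x' => s x' b)), (proj2 (Hs b Hb nil (Forall_nil _) x)); auto. }
unfold ddelta, Ds.
rewrite (sumn_ext n (fun b => dy b F x (s x) * (pd (fun x' => s x' b) c x + Nlin n L ginv b c x (s x)))
  (fun b => dy b F x (s x) * pd (fun x' => s x' b) c x + Nlin n L ginv b c x (s x) * dy b F x (s x)))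
  by (intros; ring).
rewrite sumn_plus. ring.
Qed.

Lemma sumn_dy_gF i j x y (w : nat -> R) :
  sumn n (fun be => dy be (gF L i j) x y * w be) = 2 * sumn n (fun be => Cartan L be i j x y * w be).
Proof. rewrite sumn_scal_l. apply sumn_ext; intros; unfold Cartan; field. Qed.

Lemma GammaLC_pullback a b c x : (b < n)%nat -> (c < n)%nat ->
  GammaLC n L ginv s a b c x = GammaHC n L ginv a b c x (s x)
    + sumn n (fun si => ginv a si x (s x) *
        (sumn n (fun be => Cartan L be si c x (s x) * Ds n L ginv s b be x)
       + sumn n (fun be => Cartan L be si b x (s x) * Ds n L ginv s c be x)
       - sumn n (fun be => Cartan L be b c x (s x) * Ds n L ginv s si be x))).
Proof.
intros Hb Hc. unfold GammaLC, GammaHC. rewrite !sumn_scal_l, <- sumn_plus.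
apply sumn_ext; intros si Hsi.
rewrite !pd_pullE, !sumn_dy_gF by auto using gF_smooth.
field.
Qed.

Lemma trace_GammaLC_pullback b x : (b < n)%nat ->
  sumn n (fun a => GammaLC n L ginv s a a b x)
  = sumn n (fun a => GammaHC n L ginv a a b x (s x))
    + sumn n (fun be => meanCartan n L ginv be x (s x) * Ds n L ginv s b be x).
Proof.
intros Hb. rewrite (sumn_ext _ _ _ (fun a Ha => GammaLC_pullback a a b x Ha Hb)), sumn_plus.
f_equal. rewrite sumn_sym_cancel by (intros; apply ginv_sym; auto).
rewrite sumn_contract_reorder. apply sumn_ext; intros be Hbe. f_equal.
unfold meanCartan. apply sumn_ext; intros a Ha. apply sumn_ext; intros si Hsi.
rewrite Cartan_sym13; auto.
Qed.

Lemma contracted_GammaLC_pullback (W : nat -> R) x :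
  sumn n (fun a => sumn n (fun b => GammaLC n L ginv s a a b x * W b))
  = sumn n (fun a => sumn n (fun mu => GammaHC n L ginv a mu a x (s x) * W mu))
    + sumn n (fun mu => meanCartan n L ginv mu x (s x) *
                        sumn n (fun a => W a * Ds n L ginv s a mu x)).
Proof.
rewrite sumn_swap.
rewrite (sumn_ext _ _ (fun b => sumn n (fun a => GammaHC n L ginv a a b x (s x) * W b)
  + sumn n (fun be => meanCartan n L ginv be x (s x) * (W b * Ds n L ginv s b be x)))).
2:{ intros b Hb. rewrite <- sumn_scal_r, trace_GammaLC_pullback, Rmult_plus_distr_r, sumn_scal_r;
    auto. f_equal. rewrite sumn_scal_r. apply sumn_ext; intros; ring. }
rewrite sumn_plus, sumn_swap. f_equal.
- apply sumn_ext; intros a Ha. apply sumn_ext; intros b Hb. rewrite GammaHC_sym; auto.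
- rewrite sumn_swap. apply sumn_ext; intros mu Hmu. rewrite sumn_scal_l. reflexivity.
Qed.

End FinslerPullback.

Theorem mainTheorem4
  (n : nat) (L : Efun) (ginv : nat -> nat -> Efun)
  (Z : nat -> Efun) (s : vec -> vec)
  (HL : smoothE n L)
  (Hhom : forall x y (lam : R), nz n y -> 0 < lam ->
            L x (fun i => lam * y i) = lam ^ 2 * L x y)
  (Hinv : forall x y, nz n y -> forall mu la, (mu < n)%nat -> (la < n)%nat ->
            sumn n (fun nu => gF L mu nu x y * ginv nu la x y) = kron mu la)
  (HZ : forall mu, (mu < n)%nat -> smoothE n (Z mu))
  (Hs : forall mu, (mu < n)%nat -> smoothM n (fun x => s x mu))
  (Hs0 : forall x, nz n (s x)) :
  forall x : vec,
    divLC n L ginv s (pullZ s Z) x =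
      pullE s (divHC n L ginv Z) x
      + sumn n (fun mu => meanCartan n L ginv mu x (s x) * DWs n L ginv s (pullZ s Z) mu x)
      + sumn n (fun mu => sumn n (fun b => dy b (Z mu) x (s x) * Ds n L ginv s mu b x)).
Proof.
intros x. unfold divLC, divHC, DWs, pullE at 1.
rewrite sumn_plus, (contracted_GammaLC_pullback n L ginv s); auto.
rewrite (sumn_ext _ _ (fun a => ddelta n L ginv a (Z a) x (s x)
   + sumn n (fun b => dy b (Z a) x (s x) * Ds n L ginv s a b x))).
2:{ intros a Ha. apply (pd_pullE n L ginv s); auto. }
rewrite !sumn_plus. unfold pullZ, pullE. ring.
Qed.
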